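(* Let $\mathcal{G}=(V,L)$ be a finite connected undirected graph with monitor set $M\subseteq V$ and non-monitor set $N=V\setminus M$, $\sigma=|N|$, and let the measurement paths $P$ be given by Controllable Simple-path Probing (CSP). Let $S\subseteq N$ be nonempty. Then: (a) if $k\le\sigma-2$, $\Gamma_{\mathcal{G}^*}(S,m')\ge k+2$ and $\min_{m\in M}\Gamma_{\mathcal{G}_m}(S,m')\ge k+1$, then $S$ is $k$-identifiable; (b) if $k\le\sigma-1$ and $S$ is $k$-identifiable, then $\Gamma_{\mathcal{G}^*}(S,m')\ge k+1$ and $\min_{m\in M}\Gamma_{\mathcal{G}_m}(S,m')\ge k$.
   Context: Here $k\ge1$ is an integer. Failure model: a failure set is any $F\subseteq N$ (monitors never fail). A measurement path fails iff it traverses at least one node of $F$. $P_F$ denotes the set of paths in $P$ traversing at least one node of $F$. Two failure sets $F_1,F_2$ are distinguishable iff $P_{F_1}\neq P_{F_2}$. A set $S\subseteq N$ is $k$-identifiable if any two failure sets $F_1,F_2\subseteq N$ with $|F_1|,|F_2|\le k$ and $F_1\cap S\neq F_2\cap S$ are distinguishable. Under CSP, $P$ consists of all simple paths (no repeated nodes) in $\mathcal{G}$ between two distinct monitors. For $M'\subseteq M$, $\mathcal{N}(M')$ denotes the set of non-monitors adjacent to at least one monitor in $M'$. The auxiliary graph $\mathcal{G}^*$ is obtained from $\mathcal{G}$ by deleting all monitors, adding a virtual node $m'$, and linking $m'$ to every node of $\mathcal{N}(M)$. For $m\in M$, the auxiliary graph $\mathcal{G}_m$ is obtained from $\mathcal{G}$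 by deleting all monitors, adding a virtual node $m'$, and linking $m'$ to every node of $\mathcal{N}(M\setminus\{m\})$. For nodes $s,t$ of a graph $\mathcal{H}$, $C_{\mathcal{H}}(s,t)$ is a minimum-cardinality set of nodes (other than $s,t$) whose deletion destroys all $s$–$t$ paths; if $s,t$ are adjacent, $C_{\mathcal{H}}(s,t):=V(\mathcal{H})\setminus\{t\}$. $\Gamma_{\mathcal{H}}(S,m):=\min_{w\in S}|C_{\mathcal{H}}(w,m)|$. *)

From mathcomp Require Import all_boot.
Set Implicit Arguments. Unset Strict Implicit. Unset Printing Implicit Defensive.

Section Defs.
Variable V : finType.
Variable e : rel V.
Variable M : {set V}.        (* monitors; N = ~: M *)

(* Measurement paths under CSP: simple paths (as node sequences) between two
   distinct monitors. *)
Definition csp_path (p : seq V) : bool :=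
  if p is x :: q then
    [&& path e x q, uniq p, x \in M, last x q \in M & x != last x q]
  else false.

Definition PF (F : {set V}) (p : seq V) : bool :=
  csp_path p && has (fun v => v \in F) p.

Definition distinguishable (F1 F2 : {set V}) : Prop :=
  exists p : seq V, PF F1 p != PF F2 p.

Definition k_identifiable (k : nat) (S : {set V}) : Prop :=
  forall F1 F2 : {set V},
    F1 \subset ~: M -> F2 \subset ~: M ->
    #|F1| <= k -> #|F2| <= k ->
    F1 :&: S != F2 :&: S -> distinguishable F1 F2.
End Defs.

(* Generic graph H given by a vertex set W of a finite type T and an edge
   relation h (only edges between vertices of W count). *)
Section Cut.
Variable T : finType.
Variable h : rel T.
Variable W : {set T}.

Definition restr (X : {set T}) : rel T :=
  [rel x y | [&& h x y, x \in X & y \in X]].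

Definition separates (s t : T) (C : {set T}) : bool :=
  (C \subset W :\: [set s; t]) && ~~ connect (restr (W :\: C)) s t.

Definition cutsize (s t : T) : nat :=
  if h s t then #|W :\ t|
  else \big[minn/#|W|]_(C : {set T} | separates s t C) #|C|.

Definition Gamma (S : {set T}) (t : T) : nat :=
  \big[minn/#|T|]_(w in S) cutsize w t.
End Cut.

(* Auxiliary graphs on option V: None is the virtual node m',
   Some v is the node v of N. *)
Section Aux.
Variable V : finType.
Variable e : rel V.
Variable N : {set V}.

Definition aux_verts : {set option V} := None |: (Some @: N).

Definition aux_edge (A : {set V}) : rel (option V) :=
  fun x y => match x, y with
  | Some u, Some v => e u v
  | None, Some v | Some v, None => (v \in N) && [exists m in A, e m v]
  | None, None => false
  end.
End Aux.

Definition Gamma_star (V : finType) (e : rel V) (M S : {set V}) : nat :=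
  Gamma (aux_edge e (~: M) M) (aux_verts (~: M)) (Some @: S) None.

Definition Gamma_m (V : finType) (e : rel V) (M : {set V}) (m : V) (S : {set V}) : nat :=
  Gamma (aux_edge e (~: M) (M :\ m)) (aux_verts (~: M)) (Some @: S) None.

From mathcomp Require Import all_boot zify.
Set Implicit Arguments. Unset Strict Implicit. Unset Printing Implicit Defensive.

(** (a) Given w in S and a failure set F avoiding w with |F| <= k, the cut
    bounds say that w reaches the monitors through N \ F even after deleting
    one more non-monitor, or after discarding any one monitor.  A two-fan
    argument (rerouting along a second path so as to shorten the common stem)
    then gives two paths from w through N \ F, disjoint apart from w, ending at
    distinct monitors; glued together they form a measurement path through w
    avoiding F, which distinguishes F from every failure set containing w.

    (b) If at most k non-monitors C separate some w in S from m' in G^*, then a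
    measurement path through w leaves w in two disjoint directions, each
    running through non-monitors until its first monitor, and both branches
    meet C; hence F := C minus one node and F + w fail exactly the same paths.
    In G_m a separator of size less than k works with F := C, since one of the
    two branches ends at a monitor other than m. *)

(* Abstracts every [count] and boolean cast, so that uniqueness bookkeeping
   via [count_mem] becomes linear arithmetic. *)
Ltac count_lia := repeat match goal with
  | |- context [nat_of_bool false] => change (nat_of_bool false) with 0
  | |- context [nat_of_bool true] => change (nat_of_bool true) with 1
  | |- context [nat_of_bool ?b] =>
      let n := fresh "b" in set n := nat_of_bool b; clearbody n
  | |- context [count ?p ?s] =>
      let n := fresh "n" in set n := count p s; clearbody n end;
  repeat match goal with H : _ |- _ => clear H end; intros; lia.

Section SeqFacts.
Variable T : eqType.
Implicit Types (s : seq T) (x : T).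

Lemma uniq_count_mem_le1 s : (forall x, count_mem x s <= 1) -> uniq s.
Proof.
elim: s => //= y s IH H; apply/andP; split.
  have := H y; rewrite eqxx /= add1n ltnS leqn0 => /eqP.
  by move/count_memPn.
by apply: IH => x; have := H x; case: (y == x) => /=; lia.
Qed.

Lemma count_mem_uniq_le1 s x : uniq s -> count_mem x s <= 1.
Proof. by move=> u; rewrite count_uniq_mem // leq_b1. Qed.

Lemma count_mem_notin s x : x \notin s -> count_mem x s = 0.
Proof. by move/count_memPn. Qed.

Lemma mem_belast_last x0 s x :
  x \in x0 :: s -> (x \in belast x0 s) || (x == last x0 s).
Proof. by rewrite lastI mem_rcons inE orbC. Qed.

Lemma last_notin_belast x0 s : uniq (x0 :: s) -> last x0 s \notin belast x0 s.
Proof. by rewrite lastI rcons_uniq => /andP[]. Qed.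

Lemma shorten_path_belast (e : rel T) (Y : pred T) u p :
  path e u p -> all Y (belast u p) ->
  exists p', [/\ path e u p', last u p' = last u p,
                 all Y (belast u p') & uniq (u :: p')].
Proof.
move=> pp Yp.
have [p' [pp' up' sub El]] : exists p',
    [/\ path e u p', uniq (u :: p'), {subset p' <= p} & last u p' = last u p].
  by case: (shortenP pp) => p' ? ? ?; exists p'.
exists p'; split => //; apply/allP => x xb.
have : x \in u :: p' := mem_belast xb.
rewrite inE => /orP[/eqP->|/sub xp].
  case: (p) sub Yp => [|v p0] sub Yp; last by case/andP: Yp.
  by case: (p') xb sub => //= y s _ /(_ y); rewrite inE eqxx => /(_ isT).
move: (@mem_belast_last u p x); rewrite inE xp orbT => /(_ isT).
case/orP=> [/(allP Yp) //|/eqP xl].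
by move: (last_notin_belast up'); rewrite El -xl xb.
Qed.

End SeqFacts.

Lemma bigmin_leq (I : finType) (P : pred I) (F : I -> nat) x j :
  P j -> \big[minn/x]_(i | P i) F i <= F j.
Proof.
move=> Pj; rewrite unlock; elim: (index_enum I) (mem_index_enum j) => //= i r IH.
rewrite inE => /orP[/eqP<-|/IH le]; first by rewrite Pj geq_minl.
by case: (P i) => //; exact: leq_trans (geq_minr _ _) le.
Qed.

Section Bridge.
Variables (T : eqType) (e : rel T) (A B : pred T).
Hypothesis A_notB : forall x, A x -> ~~ B x.

(* [z] is the first node of [B] on the path and [y] the last node of [A] before it. *)
Lemma path_bridge s u h : A u -> all (fun x => ~~ A x && ~~ B x) h ->
  uniq (u :: h ++ s) -> path e u (h ++ s) -> B (last u (h ++ s)) ->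
  exists y g z, [/\ A y, B z, path e y (rcons g z),
     all (fun x => ~~ A x && ~~ B x) g &
     uniq (y :: rcons g z) /\ {subset y :: rcons g z <= u :: h ++ s}].
Proof.
elim: s u h => [|v s IH] u h Au Hh Uu Pu Bl.
  rewrite cats0 in Bl.
  have := mem_last u h; rewrite inE => /orP[/eqP E|Hin].
    by move: (A_notB Au); rewrite -E Bl.
  by have /andP[_] := allP Hh _ Hin; rewrite Bl.
case Bv: (B v).
  exists u, h, v; split => //.
    by move: Pu; rewrite -cat_rcons cat_path => /andP[].
  split; first by move: Uu; rewrite -cat_rcons -cat_cons cat_uniq => /andP[].
  by move=> x; rewrite -cat_rcons -cat_cons mem_cat => ->.
case Av: (A v).
  have [|||y [g [z [Ay Bz pg ag [ug sub]]]]] := IH v [::] Av isT.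
  - by move: Uu; rewrite -cat_cons cat_uniq => /and3P[].
  - by move: Pu; rewrite cat_path => /andP[_] /= /andP[].
  - by move: Bl; rewrite last_cat.
  exists y, g, z; split => //; split => // x /sub Hx.
  by rewrite -cat_cons mem_cat Hx orbT.
have [||||y [g [z [Ay Bz pg ag [ug sub]]]]] := IH u (rcons h v) Au.
- by rewrite all_rcons Av Bv.
- by rewrite cat_rcons.
- by rewrite cat_rcons.
- by rewrite cat_rcons.
by exists y, g, z; split => //; split => //; rewrite -cat_rcons.
Qed.

End Bridge.

Section TwoFan.
Variables (T : finType) (e : rel T) (W X : {set T}) (w : T).
Hypothesis X_notW : forall x, x \in X -> x \notin W.
Hypothesis wW : w \in W.

Record fan_path (Y Z : {set T}) (p : seq T) : Prop := FanPath {
  fan_path_path : path e w p;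
  fan_path_last : last w p \in Z;
  fan_path_inner : all (fun x => x \in Y) (belast w p);
  fan_path_uniq : uniq (w :: p) }.

Record fan (a p1 p2 : seq T) : Prop := Fan {
  fan_stem : path e w a;
  fan_path1 : path e (last w a) p1;
  fan_path2 : path e (last w a) p2;
  fan_uniq : uniq (w :: a ++ p1 ++ p2);
  fan_stem_in : all (fun x => x \in W) (w :: a);
  fan_inner1 : all (fun x => x \in W) (belast (last w a) p1);
  fan_inner2 : all (fun x => x \in W) (belast (last w a) p2);
  fan_last1 : last (last w a) p1 \in X;
  fan_last2 : last (last w a) p2 \in X;
  fan_last_neq : last (last w a) p1 != last (last w a) p2 }.

Lemma fan_sym a p1 p2 : fan a p1 p2 -> fan a p2 p1.
Proof.
move=> [pa pp1 pp2 U Wa W1 W2 X1 X2 ne]; constructor => //; last by rewrite eq_sym.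
apply: uniq_count_mem_le1 => x; have := count_mem_uniq_le1 x U.
rewrite /= !count_cat; count_lia.
Qed.

(* Take a path [P] to [X] and a path [Q] to [X] minus the end of [P]; branch
   at the last node of [P] that [Q] visits before it reaches [X]. *)
Lemma fan_exists : (exists p, fan_path W X p) ->
  (forall x0, x0 \in X -> exists p, fan_path W (X :\ x0) p) ->
  exists a p1 p2, fan a p1 p2.
Proof.
move=> [P [pP lP WP uP]] /(_ _ lP) [Q [pQ lQ WQ uQ]].
have Pn : P != [::] by case: (P) lP => //= lw; move: (X_notW lw); rewrite wW.
have [||||||y [g [z [Ay Bz pg ag [ug sub]]]]] :=
  @path_bridge T e (fun x => x \in belast w P) (fun x => x \in X) _ Q w [::].
- by move=> x /= /(allP WP) xW; apply/negP => /X_notW; rewrite xW.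
- by case: (P) Pn => //= x P' _; rewrite inE eqxx.
- by [].
- by [].
- by [].
- by move: lQ; rewrite inE => /andP[].
have zx1 : z != last w P.
  have := sub z; rewrite !inE mem_rcons inE eqxx orbT.
  move=> /(_ isT) /mem_belast_last /orP[/(allP WQ) zW|/eqP ->].
    by move: (X_notW Bz); rewrite zW.
  by move: lQ; rewrite !inE => /andP[].
have gW : all (fun x => x \in W) g.
  apply/allP => x xg; have /andP[_ xX] := allP ag _ xg.
  have := sub x; rewrite /= inE mem_rcons inE xg !orbT.
  move=> /(_ isT) /mem_belast_last /orP[/(allP WQ) //|/eqP E].
  by move: lQ; rewrite -E inE => /andP[_]; rewrite (negbTE xX).
have yW : y \in W by apply: (allP WP).
have Hy : y \in w :: P by apply: mem_belast Ay.
clear lQ sub; move: pP lP WP uP Pn Ay zx1 ag.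
case: P / {Hy}(splitPl Hy) => a p1 ly pP lP WP uP Pn Ay zx1 ag.
exists a, p1, (rcons g z).
move: pP; rewrite cat_path ly => /andP[pa pp1].
have WP0 := WP; move: WP; rewrite belast_cat all_cat ly => /andP[Wba Wp1].
constructor; rewrite ?ly //.
- have ug2 : uniq (rcons g z) by case/andP: ug.
  rewrite -cat_cons catA cat_uniq uP /= ug2 andbT.
  apply/hasPn => x; rewrite mem_rcons inE => /orP[/eqP->|xg].
    apply/negP => /mem_belast_last /orP[/(allP WP0) zW|/eqP zl].
      by move: (X_notW Bz); rewrite zW.
    by move: zx1; rewrite -zl eqxx.
  have /andP[xA xX] := allP ag _ xg.
  apply/negP => /mem_belast_last /orP[xb|/eqP xl].
    by rewrite xb in xA.
  by move: xX; rewrite xl lP.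
- by apply/allP => x /mem_belast_last /orP[/(allP Wba) //|/eqP ->]; rewrite ly.
- by rewrite belast_rcons /= yW.
- by move: lP; rewrite last_cat ly.
- by rewrite last_rcons.
- by rewrite last_rcons eq_sym -ly -last_cat.
Qed.

(* The bridge [g] from the stem node [y] to [z] in the first branch replaces the
   part of that branch before [z]; the stem after [y] is prepended to the second
   branch. *)
Lemma fan_reroute_branch a p1 p2 y g z :
  fan a p1 p2 -> y \in w :: a -> y != last w a -> all (fun x => x \in W) g ->
  all (fun x => (x \notin w :: a) && ~~ ((x \in p1) || (x \in p2) || (x \in X))) g ->
  path e y (rcons g z) -> uniq (y :: rcons g z) -> z \in p1 ->
  exists a' p1' p2', fan a' p1' p2' /\ size a' < size a.
Proof.
move=> [pa pp1 pp2 U Wa W1 W2 X1 X2 ne] Ay yb gW ag pg ug Hz.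
move: pa pp1 pp2 U Wa W1 W2 X1 X2 ne yb ag.
case: a / {Ay}(splitPl Ay) => a1 a2 ly.
case: p1 / {Hz}(splitPr Hz) => u1 u2 pa pp1 pp2 U Wa W1 W2 X1 X2 ne yb ag.
have a2n : a2 != [::] by case: (a2) yb => //; rewrite cats0 ly eqxx.
have ug2 : uniq g by move: ug; rewrite /= rcons_uniq => /and3P[].
move: pa; rewrite cat_path ly => /andP[pa1 pa2].
rewrite last_cat ly in pp1 pp2 W1 W2 X1 X2 ne.
have yW : y \in W by apply: (allP Wa); rewrite -ly -cat_cons mem_cat mem_last.
exists a1, (rcons g z ++ u2), (a2 ++ p2); split; last first.
  by rewrite size_cat -{1}(addn0 (size a1)) ltn_add2l lt0n size_eq0.
constructor; rewrite ?ly.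
- exact: pa1.
- rewrite cat_path pg last_rcons /=.
  by move: pp1; rewrite cat_path => /andP[_] /= /andP[].
- by rewrite cat_path pa2.
- apply: uniq_count_mem_le1 => x; have := count_mem_uniq_le1 x U.
  rewrite -cats1 /= !count_cat /=.
  case xg: (x \in g); last by rewrite (count_mem_notin (negbT xg)); count_lia.
  have /andP[xA xB] := allP ag _ xg.
  move: xA xB; rewrite !inE !mem_cat !inE !negb_or.
  move=> /and3P[xw xa1 xa2] /andP[/andP[/and3P[xu1 xz xu2] xp2] xX].
  rewrite (count_mem_notin xa1) (count_mem_notin xa2) (count_mem_notin xu2).
  rewrite (count_mem_notin xp2) eq_sym (negbTE xw) eq_sym (negbTE xz).
  have := count_mem_uniq_le1 x ug2; count_lia.
- by move: Wa; rewrite -cat_cons all_cat => /andP[].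
- rewrite belast_cat belast_rcons last_rcons all_cat /= yW gW /=.
  by move: W1; rewrite belast_cat all_cat => /andP[_] /= /andP[].
- rewrite belast_cat all_cat W2 andbT; apply/allP => x /mem_belast.
  rewrite -ly => xin; apply: (allP Wa).
  by move: xin; rewrite inE => /orP[/eqP->|xa2];
     rewrite -cat_cons mem_cat ?mem_last ?xa2 ?orbT.
- by move: X1; rewrite !last_cat last_rcons.
- by rewrite last_cat.
- by move: ne; rewrite !last_cat last_rcons.
Qed.

(* The bridge [g] from the stem node [y] to a fresh target [z] becomes the
   first branch; the stem after [y] followed by the old first branch becomes
   the second one. *)
Lemma fan_reroute_target a p1 p2 y g z :
  fan a p1 p2 -> y \in w :: a -> y != last w a -> all (fun x => x \in W) g ->
  all (fun x => (x \notin w :: a) && ~~ ((x \in p1) || (x \in p2) || (x \in X))) g ->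
  path e y (rcons g z) -> uniq (y :: rcons g z) -> z \notin p1 -> z \in X ->
  exists a' p1' p2', fan a' p1' p2' /\ size a' < size a.
Proof.
move=> [pa pp1 pp2 U Wa W1 W2 X1 X2 ne] Ay yb gW ag pg ug Hz1 zX.
move: pa pp1 pp2 U Wa W1 W2 X1 X2 ne yb ag.
case: a / {Ay}(splitPl Ay) => a1 a2 ly pa pp1 pp2 U Wa W1 W2 X1 X2 ne yb ag.
have a2n : a2 != [::] by case: (a2) yb => //; rewrite cats0 ly eqxx.
have ug2 : uniq g by move: ug; rewrite /= rcons_uniq => /and3P[].
have zg : z \notin g by move: ug; rewrite /= rcons_uniq => /and3P[].
move: pa; rewrite cat_path ly => /andP[pa1 pa2].
rewrite last_cat ly in pp1 pp2 W1 W2 X1 X2 ne.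
have yW : y \in W by apply: (allP Wa); rewrite -ly -cat_cons mem_cat mem_last.
have zA : z \notin w :: a1 ++ a2.
  by apply/negP => /(allP Wa) zW; move: (X_notW zX); rewrite zW.
have p1n : p1 != [::].
  case: (p1) X1 => //= Hl; move: (X_notW Hl).
  by rewrite -ly -last_cat (allP Wa) // mem_last.
exists a1, (rcons g z), (a2 ++ p1); split; last first.
  by rewrite size_cat -{1}(addn0 (size a1)) ltn_add2l lt0n size_eq0.
constructor; rewrite ?ly.
- exact: pa1.
- exact: pg.
- by rewrite cat_path pa2.
- apply: uniq_count_mem_le1 => x; have := count_mem_uniq_le1 x U.
  rewrite -cats1 /= !count_cat /=.
  case xg: (x \in g).
    have /andP[xA xB] := allP ag _ xg.
    move: xA xB; rewrite !inE !mem_cat !negb_or.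
    move=> /and3P[xw xa1 xa2] /andP[/andP[xp1 xp2] xX].
    rewrite (count_mem_notin xa1) (count_mem_notin xa2) (count_mem_notin xp1).
    rewrite (count_mem_notin xp2) eq_sym (negbTE xw).
    have -> : (z == x) = false by apply/negP => /eqP zx; move: zg; rewrite zx xg.
    have := count_mem_uniq_le1 x ug2; count_lia.
  rewrite (count_mem_notin (negbT xg)).
  case: (eqVneq z x) => [<-|zx]; last by count_lia.
  move: zA; rewrite !inE !mem_cat !negb_or => /and3P[zw za1 za2].
  rewrite (count_mem_notin za1) (count_mem_notin za2) (count_mem_notin Hz1).
  by rewrite eq_sym (negbTE zw).
- by move: Wa; rewrite -cat_cons all_cat => /andP[].
- by rewrite belast_rcons /= yW gW.
- rewrite belast_cat all_cat W1 andbT; apply/allP => x /mem_belast.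
  rewrite -ly => xin; apply: (allP Wa).
  by move: xin; rewrite inE => /orP[/eqP->|xa2];
     rewrite -cat_cons mem_cat ?mem_last ?xa2 ?orbT.
- by rewrite last_rcons.
- by rewrite last_cat.
- rewrite last_rcons last_cat; apply/eqP => zl; move: Hz1.
  by case: (p1) zl p1n => //= x s -> _; rewrite mem_last.
Qed.

(* A path from [w] to [X] avoiding the branch point of the fan leaves the stem
   at some node [y] and first meets a branch or [X] at some [z]. *)
Lemma fan_shorten a p1 p2 : fan a p1 p2 -> a != [::] ->
  (forall v, v \in W -> v != w -> exists p, fan_path (W :\ v) X p) ->
  exists a' p1' p2', fan a' p1' p2' /\ size a' < size a.
Proof.
move=> C an0 Havoid.
have [pa pp1 pp2 U Wa W1 W2 X1 X2 ne] := C.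
have bW : last w a \in W by apply: (allP Wa); apply: mem_last.
have bw : last w a != w.
  apply/eqP => E; move: U; rewrite /= => /andP[wn _]; case/negP: wn.
  rewrite mem_cat; apply/orP; left; rewrite -{1}E.
  by case: (a) an0 => // x s _; rewrite /= mem_last.
have [R [pR lR WR uR]] := Havoid _ bW bw.
have [||||||y [g [z [Ay Bz pg ag [ug sub]]]]] :=
  @path_bridge T e (fun x => x \in w :: a)
    (fun x => (x \in p1) || (x \in p2) || (x \in X)) _ R w [::].
- move=> x /= xa; rewrite !negb_or -andbA; apply/and3P; split.
  + apply/negP => x1; move: U; rewrite -cat_cons cat_uniq => /and3P[_ /hasPn H _].
    by move: (H x); rewrite mem_cat x1 xa => /(_ isT).
  + apply/negP => x1; move: U; rewrite -cat_cons cat_uniq => /and3P[_ /hasPn H _].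
    by move: (H x); rewrite !mem_cat x1 orbT xa => /(_ isT).
  + by apply/negP => /X_notW; rewrite (allP Wa).
- by rewrite inE eqxx.
- by [].
- by [].
- by [].
- by rewrite /= lR !orbT.
have yR : y \in w :: R by apply: sub; rewrite inE eqxx.
have yb : y != last w a.
  case/orP: (mem_belast_last yR) => [/(allP WR)|/eqP yl].
    by rewrite !inE => /andP[].
  by move: (X_notW lR); rewrite -yl (allP Wa).
have gW : all (fun x => x \in W) g.
  apply/allP => x xg; have /andP[_] := allP ag _ xg.
  rewrite !negb_or => /andP[_ xX].
  have := sub x; rewrite /= inE mem_rcons inE xg !orbT.
  move=> /(_ isT) /mem_belast_last /orP[/(allP WR)|/eqP E].
    by rewrite inE => /andP[].
  by move: xX; rewrite E lR.
case/orP: Bz => [/orP[z1|z2]|zX].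
- exact: fan_reroute_branch C Ay yb gW ag pg ug z1.
- apply: fan_reroute_branch (fan_sym C) Ay yb gW _ pg ug z2.
  apply/allP => x xg; have /andP[-> ] := allP ag _ xg.
  by rewrite !negb_or => /andP[/andP[-> ->] ->].
case z1: (z \in p1).
  exact: fan_reroute_branch C Ay yb gW ag pg ug z1.
exact: fan_reroute_target C Ay yb gW ag pg ug (negbT z1) zX.
Qed.

(* The two-path case of Menger's fan lemma. *)
Lemma two_fan : (exists p, fan_path W X p) ->
  (forall v, v \in W -> v != w -> exists p, fan_path (W :\ v) X p) ->
  (forall x0, x0 \in X -> exists p, fan_path W (X :\ x0) p) ->
  exists p1 p2, fan [::] p1 p2.
Proof.
move=> Hreach Havoid Hmiss; have [a [p1 [p2 C]]] := fan_exists Hreach Hmiss.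
elim: {a}(size a) {-2}a (leqnn (size a)) p1 p2 C => [|n IH] a.
  by rewrite leqn0 size_eq0 => /eqP -> p1 p2 C; exists p1, p2.
move=> Ha p1 p2 C; case: (eqVneq a [::]) => [E|an0].
  by exists p1, p2; rewrite -E.
have [a' [p1' [p2' [C' Ha']]]] := fan_shorten C an0 Havoid.
by apply: (IH a' _ p1' p2' C'); rewrite -ltnS; apply: leq_trans Ha' Ha.
Qed.

End TwoFan.

Section CutBounds.
Variables (T : finType) (h : rel T) (W : {set T}).

Lemma cutsize_leq_card s t (C : {set T}) : s \in W -> t \in W ->
  C \subset W :\: [set s; t] -> ~~ connect (restr h (W :\: C)) s t ->
  cutsize h W s t <= #|C|.
Proof.
move=> sW tW sub nc; rewrite /cutsize.
have sC : s \notin C by apply/negP => /(subsetP sub); rewrite !inE eqxx.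
have tC : t \notin C by apply/negP => /(subsetP sub); rewrite !inE eqxx orbT.
case hst: (h s t).
  by case/negP: nc; apply: connect1; rewrite /restr /= hst !inE sW tW sC tC.
by apply: bigmin_leq; rewrite /separates sub nc.
Qed.

Lemma leq_cutsize n s t : (h s t -> n <= #|W :\ t|) -> n <= #|W| ->
  (forall C, separates h W s t C -> n <= #|C|) -> n <= cutsize h W s t.
Proof.
move=> Hadj HW Hsep; rewrite /cutsize; case: (h s t) Hadj => [->//|_].
by apply: (big_ind (fun m => n <= m)) => // x y; rewrite leq_min => -> ->.
Qed.

Lemma Gamma_leq_cutsize (S : {set T}) t w : w \in S ->
  Gamma h W S t <= cutsize h W w t.
Proof. exact: bigmin_leq. Qed.

Lemma leq_Gamma n (S : {set T}) t : n <= #|T| ->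
  (forall w, w \in S -> n <= cutsize h W w t) -> n <= Gamma h W S t.
Proof.
move=> HT HS; rewrite /Gamma.
by apply: (big_ind (fun m => n <= m)) => // x y; rewrite leq_min => -> ->.
Qed.

End CutBounds.

Section Monitoring.
Variables (V : finType) (e : rel V) (M : {set V}).
Hypothesis e_sym : symmetric e.
Local Notation N := (~: M).
Local Notation aux A C := (restr (aux_edge e N A) (aux_verts N :\: Some @: C)).

Lemma Some_in_aux_vertsD (C : {set V}) u :
  (Some u \in aux_verts N :\: Some @: C) = (u \in N :\: C).
Proof. by rewrite /aux_verts !inE !(mem_imset _ _ (@Some_inj _)) !inE. Qed.

Lemma None_in_aux_vertsD (C : {set V}) : None \in aux_verts N :\: Some @: C.
Proof. by rewrite /aux_verts !inE eqxx andbT; apply/negP => /imsetP[x _]. Qed.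

Lemma card_aux_verts : #|aux_verts N| = #|N|.+1.
Proof.
rewrite /aux_verts cardsU1 card_imset; last exact: Some_inj.
by have -> : None \notin [set Some x | x in N] by apply/negP => /imsetP[].
Qed.

Lemma card_aux_verts_None : #|aux_verts N :\ None| = #|N|.
Proof.
rewrite /aux_verts setU1K; first by rewrite card_imset //; apply: Some_inj.
by apply/negP => /imsetP[].
Qed.

Lemma Some_sub_aux_vertsD (C : {set V}) w : C \subset N -> w \notin C ->
  Some @: C \subset aux_verts N :\: [set Some w; None].
Proof.
move=> CN wC; apply/subsetP => _ /imsetP[c cC ->].
rewrite !inE /= (mem_imset _ _ (@Some_inj _)) (subsetP CN _ cC) andbT.
by apply/negP => /orP[/eqP[E]|//]; move: wC; rewrite -E cC.
Qed.

Lemma aux_separatorP (C : {set option V}) w :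
  C \subset aux_verts N :\: [set Some w; None] ->
  exists C' : {set V}, [/\ C = Some @: C', C' \subset N & w \notin C'].
Proof.
move=> sub; exists [set v : V | Some v \in C]; split.
- apply/setP => -[v|]; first by rewrite (mem_imset _ _ (@Some_inj _)) inE.
  have -> : (None \in Some @: [set v | Some v \in C]) = false.
    by apply/negP => /imsetP[].
  by apply/negP => /(subsetP sub); rewrite !inE eqxx orbT.
- apply/subsetP => v; rewrite inE => /(subsetP sub).
  rewrite /aux_verts !inE (mem_imset _ _ (@Some_inj _)) inE.
  by case/andP.
- by rewrite inE; apply/negP => /(subsetP sub); rewrite !inE eqxx.
Qed.

Lemma aux_path_monitor_path (A C : {set V}) : A \subset M ->
  forall s u, u \in N :\: C -> path (aux A C) (Some u) s -> last (Some u) s = None ->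
  exists p, [/\ path e u p, last u p \in A &
                all (fun x => x \in N :\: C) (belast u p)].
Proof.
move=> AM; elim=> [|o s IH] u uN //= /andP[ed ps] ls.
rewrite /restr /= in ed; case/and3P: ed; case: o ps ls => [v|] ps ls ed _ vin.
  rewrite Some_in_aux_vertsD in vin.
  have [p [pp lp ap]] := IH v vin ps ls.
  by exists (v :: p); rewrite /= ed pp lp uN ap.
case/andP: ed => _ /existsP [m /andP[mA em]].
by exists [:: m]; rewrite /= e_sym em mA uN.
Qed.

Lemma monitor_path_connect_aux (A C : {set V}) : A \subset M ->
  forall p u, u \in N :\: C -> path e u p -> last u p \in A ->
  all (fun x => x \in N :\: C) (belast u p) -> connect (aux A C) (Some u) None.
Proof.
move=> AM; elim=> [|v p IH] u uN /=.
  by move=> _ /(subsetP AM) uM; move: uN; rewrite !inE uM andbF.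
case/andP=> euv pp lp /andP[_ ap].
case: p IH pp lp ap => [|v2 p] IH pp lp ap.
  apply: connect1; rewrite /restr /= Some_in_aux_vertsD uN None_in_aux_vertsD !andbT.
  have uN' : u \in N by move: uN; rewrite inE => /andP[].
  by rewrite uN' /=; apply/existsP; exists v; rewrite lp e_sym.
have vN : v \in N :\: C by case/andP: ap.
apply: connect_trans (IH _ vN pp lp ap).
by apply: connect1; rewrite /restr /= euv !Some_in_aux_vertsD uN vN.
Qed.

Lemma fan_path_of_cutsize (A C : {set V}) w : A \subset M -> C \subset N ->
  w \in N :\: C -> #|C| < cutsize (aux_edge e N A) (aux_verts N) (Some w) None ->
  exists p, fan_path e w (N :\: C) A p.
Proof.
move=> AM CN wNC lt.
case conn: (connect (aux A C) (Some w) None).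
  case/connectP: conn => s ps ls.
  have [p [pp lp ap]] := aux_path_monitor_path AM wNC ps (Logic.eq_sym ls).
  have [p' [pp' lp' ap' up']] := shorten_path_belast pp ap.
  by exists p'; constructor => //; rewrite lp'.
have wC : w \notin C by move: wNC; rewrite inE => /andP[].
have wN : w \in N by move: wNC; rewrite inE => /andP[].
have := @cutsize_leq_card _ (aux_edge e N A) (aux_verts N) (Some w) None (Some @: C).
rewrite card_imset; last exact: Some_inj.
move=> /(_ _ _ (Some_sub_aux_vertsD CN wC) (negbT conn)) Hcut.
suff : false by [].
rewrite -(ltnn #|C|); apply: leq_trans lt (Hcut _ _).
- by rewrite /aux_verts !inE (mem_imset _ _ (@Some_inj _)) wN orbT.
- by rewrite /aux_verts !inE eqxx.
Qed.

Lemma leq_Gamma_aux (A S : {set V}) n : S \subset N -> n <= #|N| ->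
  (forall w (C : {set V}), w \in S -> C \subset N -> w \notin C ->
     ~~ connect (aux A C) (Some w) None -> n <= #|C|) ->
  n <= Gamma (aux_edge e N A) (aux_verts N) (Some @: S) None.
Proof.
move=> SN nN Hsep; apply: leq_Gamma.
  by rewrite card_option; apply: leq_trans nN (leq_trans (max_card _) (leqnSn _)).
move=> _ /imsetP[w wS ->]; apply: leq_cutsize; first by rewrite card_aux_verts_None.
  by rewrite card_aux_verts (leq_trans nN).
move=> C /andP[sub nc]; have [C' [CE C'N wC']] := aux_separatorP sub.
rewrite CE in nc *; rewrite card_imset; last exact: Some_inj.
exact: Hsep wS C'N wC' nc.
Qed.


Definition monitor_branch (w : V) (q : seq V) : bool :=
  [&& path e w q, last w q \in M & all (fun x => x \notin M) (belast w q)].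

Lemma monitor_branch_subpath s u : path e u s -> last u s \in M -> u \notin M ->
  exists2 s', monitor_branch u s' & {subset s' <= s}.
Proof.
elim: s u => [|v s IH] u /=; first by move=> _ ->.
case/andP => euv ps ls uM.
case vM: (v \in M).
  by exists [:: v]; rewrite /monitor_branch /= ?euv ?vM ?uM // => x; rewrite !inE => ->.
have [s' /and3P[ps' ls' as'] sub] := IH v ps ls (negbT vM).
exists (v :: s'); first by rewrite /monitor_branch /= euv ps' ls' uM as'.
by move=> x; rewrite !inE => /orP[->//|/sub ->]; rewrite orbT.
Qed.

Lemma last_monitor_branch w q : w \notin M -> monitor_branch w q -> last w q \in q.
Proof.
move=> wM /and3P[_ lM _]; have := mem_last w q; rewrite inE => /orP[/eqP E|//].
by move: lM; rewrite E (negbTE wM).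
Qed.

(* [q1] is the reversed part of [p] before [w] and [q2] the part after it,
   each cut at its first monitor. *)
Lemma csp_path_split p w : csp_path e M p -> w \in p -> w \notin M ->
  exists q1 q2, [/\ monitor_branch w q1, monitor_branch w q2,
    {subset q1 <= p}, {subset q2 <= p} & forall y, y \in q1 -> y \notin q2].
Proof.
case: p => [|x q] //= /and5P[pq uq xM lM xl] wp wM.
have wq : w \in q.
  by move: wp; rewrite inE => /orP[/eqP wx|//]; move: wM; rewrite wx xM.
clear wp; move: pq uq lM xl; case: q / {wq}(splitPr wq) => l1 l2 pq uq lM xl.
have := pq; rewrite cat_path => /andP[pl1 /= /andP[ew pl2]].
have pL : path e w (rev (x :: l1)).
  have := rev_path e x (rcons l1 w); rewrite last_rcons belast_rcons => ->.
  rewrite (@eq_path _ _ e); first by rewrite rcons_path pl1 ew.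
  by move=> a b /=; rewrite e_sym.
have lx : last w (rev (x :: l1)) \in M by rewrite rev_cons last_rcons.
have [q1 bq1 sq1] := monitor_branch_subpath pL lx wM.
have l2M : last w l2 \in M by move: lM; rewrite last_cat.
have [q2 bq2 sq2] := monitor_branch_subpath pl2 l2M wM.
exists q1, q2; split => //.
- by move=> y /sq1; rewrite mem_rev => yl; rewrite -cat_cons mem_cat yl.
- by move=> y /sq2 yl; rewrite inE !mem_cat inE yl !orbT.
move=> y /sq1; rewrite mem_rev => y1; apply/negP => /sq2 y2.
case/andP: uq => xn; rewrite cat_uniq => /and3P[_ /hasPn H _].
move: y1; rewrite inE => /orP[/eqP yx|y1].
  by move: xn; rewrite -yx mem_cat inE y2 !orbT.
by move: (H y); rewrite inE y2 orbT => /(_ isT); rewrite y1.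
Qed.

Lemma separator_meets_branch (A C : {set V}) w q : A \subset M -> w \in N :\: C ->
  monitor_branch w q -> last w q \in A -> ~~ connect (aux A C) (Some w) None ->
  exists2 c, c \in q & c \in C.
Proof.
move=> AM wNC /and3P[pq _ aq] lq nc.
case: (boolP (has (fun x => x \in C) q)) => [/hasP[c cq cC]|/hasPn H].
  by exists c.
case/negP: nc; apply: (monitor_path_connect_aux AM wNC pq lq).
apply/allP => x xb; rewrite in_setD in_setC (allP aq _ xb) andbT.
move: (mem_belast xb); rewrite inE => /orP[/eqP ->|/H //].
by move: wNC; rewrite in_setD => /andP[].
Qed.

Lemma csp_path_meets_separator_twice (C : {set V}) w p : w \in N :\: C ->
  ~~ connect (aux M C) (Some w) None -> csp_path e M p -> w \in p ->
  exists c1 c2, [/\ c1 \in p, c2 \in p, c1 \in C, c2 \in C & c1 != c2].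
Proof.
move=> wNC nc cp wp.
have wM : w \notin M by move: wNC; rewrite !inE => /andP[].
have [q1 [q2 [b1 b2 s1 s2 dis]]] := csp_path_split cp wp wM.
have [lq1 lq2] : last w q1 \in M /\ last w q2 \in M.
  by case/and3P: b1 => _ -> _; case/and3P: b2 => _ -> _.
have [c1 c1q c1C] := separator_meets_branch (subxx M) wNC b1 lq1 nc.
have [c2 c2q c2C] := separator_meets_branch (subxx M) wNC b2 lq2 nc.
exists c1, c2; split; [exact: s1 | exact: s2 | by [] | by [] |].
by apply/eqP => E; move: (dis _ c1q); rewrite E c2q.
Qed.

(* The two branches end at distinct monitors, so at least one avoids [m]. *)
Lemma csp_path_meets_separator_m (C : {set V}) m w p : w \in N :\: C ->
  ~~ connect (aux (M :\ m) C) (Some w) None -> csp_path e M p -> w \in p ->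
  exists2 c, c \in p & c \in C.
Proof.
move=> wNC nc cp wp.
have wM : w \notin M by move: wNC; rewrite !inE => /andP[].
have [q1 [q2 [b1 b2 s1 s2 dis]]] := csp_path_split cp wp wM.
have AM : M :\ m \subset M := subD1set M m.
have l12 : last w q1 != last w q2.
  apply/eqP => E; move: (dis _ (last_monitor_branch wM b1)).
  by rewrite E (last_monitor_branch wM b2).
have [lq1 lq2] : last w q1 \in M /\ last w q2 \in M.
  by case/and3P: b1 => _ -> _; case/and3P: b2 => _ -> _.
case: (eqVneq (last w q1) m) => [E|ne].
  have lA : last w q2 \in M :\ m by rewrite !inE lq2 andbT -E eq_sym.
  by have [c cq cC] := separator_meets_branch AM wNC b2 lA nc; exists c; [exact: s2 |].
have lA : last w q1 \in M :\ m by rewrite !inE lq1 andbT ne.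
by have [c cq cC] := separator_meets_branch AM wNC b1 lA nc; exists c; [exact: s1 |].
Qed.

End Monitoring.

Section Identifiability.
Variables (V : finType) (e : rel V) (M : {set V}).
Hypothesis e_sym : symmetric e.
Local Notation N := (~: M).

(* The reversed first branch, then [w], then the second branch. *)
Lemma csp_path_of_fan (F : {set V}) w p1 p2 : F \subset N ->
  fan e (N :\: F) M w [::] p1 p2 ->
  exists p, [&& csp_path e M p, w \in p & ~~ has (fun x => x \in F) p].
Proof.
move=> FN [_ pp1 pp2 U Wa W1 W2 X1 X2 ne]; rewrite /= in pp1 pp2 W1 W2 X1 X2 ne.
have wM : w \notin M by move: Wa; rewrite /= !inE => /andP[/andP[_ ->]].
case/lastP: p1 pp1 U W1 X1 ne => [|r1 x1] pp1 U W1 X1 ne.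
  by move: X1 wM; rewrite /= => ->.
rewrite last_rcons in X1 ne.
exists (x1 :: (rev r1 ++ w :: p2)).
have pr : path e x1 (rev (w :: r1)).
  have := rev_path e w (rcons r1 x1); rewrite last_rcons belast_rcons => ->.
  by rewrite (@eq_path _ _ e) // => a b /=; rewrite e_sym.
apply/and3P; split.
- apply/and5P; split.
  + by rewrite -cat_rcons -rev_cons cat_path pr /= rev_cons last_rcons.
  + apply: uniq_count_mem_le1 => x; have := count_mem_uniq_le1 x U.
    rewrite -cat_rcons -rev_cons -cat_cons.
    rewrite /= !count_cat !count_rev /= -cats1 !count_cat /=; count_lia.
  + exact: X1.
  + by rewrite last_cat /=.
  + by rewrite last_cat /=.
- by rewrite inE mem_cat inE eqxx !orbT.
apply/hasPn => x; rewrite inE mem_cat inE.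
case/orP=> [/eqP ->|/orP[xr|/orP[/eqP->|xp]]].
- by apply/negP => /(subsetP FN); rewrite inE X1.
- move: xr; rewrite mem_rev => xr; move: W1; rewrite belast_rcons.
  by move=> /allP /(_ x); rewrite inE xr orbT !inE => /(_ isT) /andP[].
- by move: W1; rewrite belast_rcons /= !inE => /andP[/andP[]].
have := @mem_belast_last _ w p2 x; rewrite inE xp orbT => /(_ isT).
case/orP=> [/(allP W2)|/eqP ->]; first by rewrite !inE => /andP[].
by apply/negP => /(subsetP FN); rewrite inE X2.
Qed.

(* The cut bound for G^* gives a path from [w] to the monitors avoiding [F]
   and any one further node; the bound for G_m one avoiding [F] and ending
   outside any given monitor. *)
Lemma csp_path_avoiding (S F : {set V}) k w : w \in S -> S \subset N ->
  w \notin F -> F \subset N -> #|F| <= k ->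
  k + 2 <= Gamma_star e M S -> (forall m, m \in M -> k + 1 <= Gamma_m e M m S) ->
  exists p, [&& csp_path e M p, w \in p & ~~ has (fun x => x \in F) p].
Proof.
move=> wS SN wF FN Fk Hstar Hm.
have wN : w \in N by apply: (subsetP SN).
have wW : w \in N :\: F by rewrite inE wF wN.
have cut_star : k + 2 <= cutsize (aux_edge e N M) (aux_verts N) (Some w) None.
  by apply: leq_trans Hstar _; apply: Gamma_leq_cutsize; exact: imset_f.
suff [p1 [p2 Fan]] : exists p1 p2, fan e (N :\: F) M w [::] p1 p2.
  exact: csp_path_of_fan FN Fan.
apply: (@two_fan _ e (N :\: F) M w _ wW).
- by move=> x xM; rewrite !inE xM andbF.
- apply: (fan_path_of_cutsize e_sym (subxx M) FN wW).
  by apply: leq_trans cut_star; rewrite addn2 ltnS (leq_trans Fk) // leqnSn.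
- move=> v vW vw.
  have -> : (N :\: F) :\ v = N :\: (v |: F).
    by apply/setP => x; rewrite !inE; case: (x == v); case: (x \in F); case: (x \in M).
  apply: (fan_path_of_cutsize e_sym (subxx M)).
  + apply/subsetP => x; rewrite !inE => /orP[/eqP->|/(subsetP FN)].
      by move: vW; rewrite !inE => /andP[].
    by rewrite inE.
  + by rewrite !inE eq_sym (negbTE vw) (negbTE wF) /= -in_setC.
  apply: leq_trans cut_star; rewrite cardsU1 addn2 ltnS.
  by apply: leq_add (leq_b1 _) Fk.
move=> m mM; apply: (fan_path_of_cutsize e_sym (subD1set M m) FN wW).
apply: leq_trans (leq_trans (Hm _ mM) (Gamma_leq_cutsize _ _ _ _)) => //.
  by rewrite addn1 ltnS.
exact: imset_f.
Qed.

Lemma distinguishable_sym F1 F2 :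
  distinguishable e M F1 F2 -> distinguishable e M F2 F1.
Proof. by case=> p Hp; exists p; rewrite eq_sym. Qed.

Lemma k_identifiable_of_Gamma (S : {set V}) k : S \subset N ->
  k + 2 <= Gamma_star e M S -> (forall m, m \in M -> k + 1 <= Gamma_m e M m S) ->
  k_identifiable e M k S.
Proof.
move=> SN Hstar Hm F1 F2 F1N F2N F1k F2k nF.
have [w wS wF] : exists2 w, w \in S & (w \in F1) != (w \in F2).
  apply/exists_inP; apply: contraNT nF => /exists_inPn H.
  apply/eqP/setP => x; rewrite !inE.
  by case: (boolP (x \in S)) => xS; rewrite ?andbF ?andbT //; apply/eqP/negPn/H.
wlog wF1 : F1 F2 F1N F2N F1k F2k {nF} wF / w \in F1.
  move=> Hwlog; case: (boolP (w \in F1)) => [|wF1]; first exact: Hwlog.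
  apply: distinguishable_sym; apply: Hwlog => //; first by rewrite eq_sym.
  by move: wF; rewrite (negbTE wF1); case: (w \in F2).
have wF2 : w \notin F2 by move: wF; rewrite wF1; case: (w \in F2).
have [p /and3P[cp wp nh]] := csp_path_avoiding wS SN wF2 F2N F2k Hstar Hm.
have hF1 : has (fun x => x \in F1) p by apply/hasP; exists w.
by exists p; rewrite /PF cp (negbTE nh) hF1.
Qed.

Lemma indistinguishable_setU1 (F : {set V}) w :
  (forall p, csp_path e M p -> w \in p -> has (fun x => x \in F) p) ->
  ~ distinguishable e M F (w |: F).
Proof.
move=> Hp [p /negP[]]; apply/eqP; rewrite /PF.
case cp: (csp_path e M p) => //=.
case: (boolP (w \in p)) => wp.
  by rewrite (Hp _ cp wp); symmetry; apply/hasP; exists w => //; rewrite !inE eqxx.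
apply: eq_in_has => x xp /=; rewrite in_setU1.
by case: (eqVneq x w) => // xw; move: wp; rewrite -xw xp.
Qed.

Lemma k_identifiable_setU1 (S F : {set V}) k w : k_identifiable e M k S ->
  w \in S -> S \subset N -> w \notin F -> F \subset N -> #|F| < k ->
  distinguishable e M F (w |: F).
Proof.
move=> Hid wS SN wF FN Fk; apply: Hid => //.
- by rewrite subUset sub1set (subsetP SN).
- exact: ltnW.
- by rewrite cardsU1 wF.
apply/negP => /eqP E.
have : w \in (w |: F) :&: S by rewrite !inE eqxx wS.
by rewrite -E inE (negbTE wF).
Qed.

(* Both branches through [w] meet the separator [C], at distinct nodes, so
   every measurement path through [w] still fails once one node is removed
   from [C]. *)
Lemma Gamma_star_of_k_identifiable (S : {set V}) k : 1 <= k -> S \subset N ->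
  k + 1 <= #|N| -> k_identifiable e M k S -> k + 1 <= Gamma_star e M S.
Proof.
move=> k1 SN kN Hid; apply: leq_Gamma_aux => // w C wS CN wC nc.
rewrite leqNgt addn1 ltnS; apply/negP => Ck.
have [c0 Cc0] : exists c0, #|C :\ c0| < k.
  case: (set_0Vmem C) => [->|[c0 c0C]]; first by exists w; rewrite set0D cards0.
  by exists c0; move: Ck; rewrite (cardsD1 c0 C) c0C add1n.
have wNC : w \in N :\: C by rewrite in_setD wC (subsetP SN).
have wC0 : w \notin C :\ c0 by rewrite !inE negb_and wC orbT.
have CN0 : C :\ c0 \subset N := subset_trans (subD1set C c0) CN.
apply: (indistinguishable_setU1 _ (k_identifiable_setU1 Hid wS SN wC0 CN0 Cc0)).
move=> p cp wp.
have [c1 [c2 [c1p c2p c1C c2C c12]]] :=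
  csp_path_meets_separator_twice e_sym wNC nc cp wp.
apply/hasP; case: (eqVneq c1 c0) => [E|ne]; last by exists c1; rewrite // !inE c1C ne.
by exists c2; rewrite // !inE c2C andbT -E eq_sym.
Qed.

Lemma Gamma_m_of_k_identifiable (S : {set V}) k m : m \in M -> S \subset N ->
  k + 1 <= #|N| -> k_identifiable e M k S -> k <= Gamma_m e M m S.
Proof.
move=> mM SN kN Hid; apply: leq_Gamma_aux => //; first exact: leq_trans (leq_addr 1 k) kN.
move=> w C wS CN wC nc; rewrite leqNgt; apply/negP => Ck.
have wNC : w \in N :\: C by rewrite in_setD wC (subsetP SN).
apply: (indistinguishable_setU1 _ (k_identifiable_setU1 Hid wS SN wC CN Ck)).
move=> p cp wp; have [c cp' cC] := csp_path_meets_separator_m e_sym wNC nc cp wp.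
by apply/hasP; exists c.
Qed.

End Identifiability.

Theorem theorem2 (V : finType) (e : rel V) (M S : {set V}) (k : nat) :
  symmetric e -> irreflexive e -> (forall x y, connect e x y) ->
  1 <= k ->
  S \subset ~: M -> S != set0 ->
  ( (k + 2 <= #|~: M| ->
     k + 2 <= Gamma_star e M S ->
     (forall m, m \in M -> k + 1 <= Gamma_m e M m S) ->
     k_identifiable e M k S)
  /\
    (k + 1 <= #|~: M| ->
     k_identifiable e M k S ->
     k + 1 <= Gamma_star e M S /\
     (forall m, m \in M -> k <= Gamma_m e M m S)) ).
Proof.
move=> e_sym _ _ k1 SN _; split => [_|kN Hid].
  exact: k_identifiable_of_Gamma.
split; first exact: Gamma_star_of_k_identifiable.
by move=> m mM; exact: Gamma_m_of_k_identifiable.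
Qed.
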